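(* Let $q$ be a prime power and let $r$ be a prime dividing $q-1$. Then for any positive integer $d$ and any integer $1\le k\le r^d-1$, there exists a polynomial $f\in\mathbb{F}_q[x]$ of degree $k$ that divides $x^{r^d}-1$ and satisfies $f(1)\neq 0$. *)

From mathcomp Require Import all_boot all_order all_algebra all_field.

(* Since r divides q - 1, F contains a primitive r-th root of unity z. Substituting X^m
   into X^r - 1 = prod_(i < r) (X - z^i) splits X^(rm) - 1 into X^m - 1 and the factors
   X^m - z^i for 0 < i < r, and for j < r the product of the first j of these has degree
   jm and does not vanish at 1. So if f divides X^m - 1, has degree k' and f(1) != 0,
   then f times that product divides X^(rm) - 1, has degree jm + k' and does not vanish
   at 1. Taking m = r^e, this builds the required divisor digit by digit from the
   base-r expansion of k. *)
From mathcomp Require Import all_boot all_order all_algebra all_field.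
From mathcomp Require Import cyclic.

Import GRing.Theory.
Local Open Scope ring_scope.

Section FinFieldPrimRoot.

Variable F : finFieldType.

Lemma finField_prim_root : exists z : F, #|F|.-1.-primitive_root z.
Proof.
have q_gt1 : (1 < #|F|)%N by rewrite (cardD1 0) (cardD1 1) !inE oner_neq0.
set units := enum (predC1 (0 : F)).
have /hasP[z _ z_prim] : has #|F|.-1.-primitive_root units.
  apply: has_prim_root; first by rewrite -ltnS prednK ?(ltnW q_gt1).
  - apply/allP => x; rewrite mem_enum => /= x_neq0.
    apply/unity_rootP; apply: (mulfI x_neq0).
    by rewrite mulr1 -exprS prednK ?expf_card // (ltnW q_gt1).
  - exact: enum_uniq.
  - by rewrite -cardE cardC1.
by exists z.
Qed.

Lemma finField_prim_root_dvdn n :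
  (n %| #|F|.-1)%N -> exists z : F, n.-primitive_root z.
Proof.
move=> n_dvd; have [z z_prim] := finField_prim_root.
by exists (z ^+ (#|F|.-1 %/ n)); apply: dvdn_prim_root.
Qed.

End FinFieldPrimRoot.

Section PrimRootFactors.

Context {F : fieldType} {r : nat} {z : F}.
Hypothesis z_prim : r.-primitive_root z.

Lemma factor_Xn_sub_1_comp m :
  'X^(r * m) - 1 = \prod_(i < r) ('X^m - (z ^+ i)%:P) :> {poly F}.
Proof.
have := congr1 (comp_poly 'X^m) (factor_Xn_sub_1 z_prim).
rewrite comp_polyB comp_Xn_poly comp_polyC -exprM mulnC => <-.
rewrite big_mkord.
rewrite (big_morph (comp_poly _) (fun p q => comp_polyM p q _) (comp_polyC 1 _)).
by apply: eq_bigr => i _; rewrite comp_polyB comp_polyX comp_polyC.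
Qed.

Definition Xn_sub_roots m j : {poly F} := \prod_(i < j) ('X^m - (z ^+ i.+1)%:P).

Lemma monic_Xn_sub_roots m j : (0 < m)%N -> Xn_sub_roots m j \is monic.
Proof. by move=> m_gt0; apply: monic_prod => i _; apply: monicXnsubC. Qed.

Lemma size_Xn_sub_roots m j : (0 < m)%N -> size (Xn_sub_roots m j) = (j * m).+1.
Proof.
move=> m_gt0; elim: j => [|j IHj].
  by rewrite /Xn_sub_roots big_ord0 size_poly1.
rewrite /Xn_sub_roots big_ord_recr /= -/(Xn_sub_roots m j).
rewrite size_Mmonic ?monicXnsubC ?size_XnsubC // -?size_poly_eq0 IHj //.
by rewrite mulSn addnC addnS.
Qed.

Lemma dvdp_Xn_sub_roots m j :
  (j < r)%N -> ('X^m - 1) * Xn_sub_roots m j %| 'X^(r * m) - 1.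
Proof.
move=> j_lt_r; have r_gt0 := prim_order_gt0 z_prim.
have j_le : (j <= r.-1)%N by rewrite -ltnS prednK.
rewrite factor_Xn_sub_1_comp -(prednK r_gt0) big_ord_recl expr0.
apply: dvdp_mul (dvdpp _) _.
rewrite [X in _ %| X](bigID (fun i : 'I_r.-1 => (i < j)%N)) /= dvdp_mulr //.
rewrite /Xn_sub_roots (big_ord_widen _ (fun i => 'X^m - (z ^+ i.+1)%:P) j_le).
by under [X in _ %| X]eq_bigr do rewrite /bump add1n.
Qed.

Lemma Xn_sub_roots1_neq0 m j : (j < r)%N -> (Xn_sub_roots m j).[1] != 0.
Proof.
move=> j_lt_r; rewrite horner_prod; apply/prodf_neq0 => i _.
rewrite hornerD hornerN hornerXn hornerC expr1n subr_eq0 eq_sym -(expr0 z).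
rewrite (eq_prim_root_expr z_prim) mod0n modn_small //.
exact: leq_ltn_trans (ltn_ord i) j_lt_r.
Qed.

Lemma exists_dvdp_Xn_sub1_size e k : (k < r ^ e)%N ->
  exists f : {poly F}, size f = k.+1 /\ f %| 'X^(r ^ e) - 1 /\ f.[1] != 0.
Proof.
elim: e k => [|e IHe] k.
  rewrite expn0 ltnS leqn0 => /eqP->; exists 1.
  by rewrite size_poly1 dvd1p hornerC oner_neq0.
set m := (r ^ e)%N.
have m_gt0 : (0 < m)%N by rewrite expn_gt0 (prim_order_gt0 z_prim).
rewrite expnS -/m => k_lt.
have [h [size_h [h_dvd h1_neq0]]] := IHe (k %% m)%N (ltn_pmod _ m_gt0).
have j_lt_r : (k %/ m < r)%N by rewrite ltn_divLR.
exists (h * Xn_sub_roots m (k %/ m)); split; [|split].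
- rewrite size_Mmonic ?monic_Xn_sub_roots -?size_poly_eq0 ?size_h //.
  by rewrite size_Xn_sub_roots // {3}(divn_eq k m) addSn addnC.
- apply: dvdp_trans (dvdp_mul h_dvd (dvdpp _)) _.
  exact: dvdp_Xn_sub_roots.
- by rewrite hornerM mulf_neq0 // Xn_sub_roots1_neq0.
Qed.

End PrimRootFactors.

Theorem lemma5p4 (F : finFieldType) (r d k : nat) :
  prime r -> (r %| #|F| - 1)%N -> (0 < d)%N ->
  (1 <= k <= r ^ d - 1)%N ->
  exists f : {poly F},
    size f = k.+1 /\ f %| 'X^(r ^ d) - 1 /\ f.[1] != 0.
Proof.
move=> r_prime; rewrite subn1 => r_dvd _ /andP[_ k_le].
have [z z_prim] : exists z : F, r.-primitive_root z by apply: finField_prim_root_dvdn.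
have k_lt : (k < r ^ d)%N.
  by rewrite (leq_ltn_trans k_le) // subn1 prednK ?expn_gt0 ?prime_gt0.
exact: exists_dvdp_Xn_sub1_size z_prim d k k_lt.
Qed.
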